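(* Let $\mathbf G=(\mathcal X,\mathcal E)$ be a directed graph with $\mathcal X=\{1,\dots,n\}$, with edge lengths $l_{ij}\ge0$ for $ij\in\mathcal E$ and $l_{ij}=+\infty$ for $ij\notin\mathcal E$. Fix $N\ge1$ and nodes $x_0,x_N$, and let $\mathcal X^{N+1}(x_0,x_N)$ denote the set of feasible paths $y=(y_0,\dots,y_N)$ with $y_0=x_0$, $y_N=x_N$, assumed nonempty. For $T>0$ let $P_T^*(x)=Z(T)^{-1}\exp(-l(x)/T)$, $Z(T)=\sum_{x}\exp(-l(x)/T)$, be the Boltzmann distribution on $\mathcal X^{N+1}$, where $l(x)=\sum_{t=0}^{N-1}l_{x_tx_{t+1}}$, and let $\mathfrak M^*_T$ be the minimizer of $\mathbb D(P\|P_T^* )$ over probability measures $P$ on $\mathcal X^{N+1}$ with initial marginal $\delta_{x_0}$ and final marginal $\delta_{x_N}$. Let $l_m(x_0,x_N)=\min_{y\in\mathcal X^{N+1}(x_0,x_N)}l(y)$. Then: (i) as $T\searrow0$, $\mathfrak M^*_T$ concentrates on the minimum length paths in $\mathcal X^{N+1}(x_0,x_N)$: if $y\in\mathcal X^{N+1}(x_0,x_N)$ has $l(y)>l_m(x_0,x_N)$, then $\mathfrak M^*_T(y)\to0$ as $T\searrow0$; (ii) as $T\nearrow+\infty$, $\mathfrak M^*_T$ tends to the uniform distribution on $\mathcal X^{N+1}(x_0,x_N)$; (iii) if $\mathcal X^{N+1}(x_0,x_N)$ is not a singleton and $l$ is not constant on it, then for each $\bar L$ with $l_m(x_0,x_N)\le\bar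 L\le\frac{1}{|\mathcal X^{N+1}(x_0,x_N)|}\sum_{y\in\mathcal X^{N+1}(x_0,x_N)}l(y)$ there is a unique $T\in[0,+\infty]$ such that $L(\mathfrak M^*_T)=\bar L$, and this $\mathfrak M^*_T$ solves the problem of maximizing the entropy $S(P)$ over probability measures $P$ on $\mathcal X^{N+1}$ with initial marginal $\delta_{x_0}$, final marginal $\delta_{x_N}$ and $L(P)=\bar L$.
   Context: A path $x=(x_0,\dots,x_N)$ is feasible if $x_tx_{t+1}\in\mathcal E$ for all $t$. $\delta_{x'}$ denotes the point mass at node $x'$. Relative entropy $\mathbb D(P\|Q)=\sum_xP(x)\log\frac{P(x)}{Q(x)}$ (with $+\infty$ if $\mathrm{Supp}P\not\subseteq\mathrm{Supp}Q$, and $0\log0=0$). Average path length of $P$: $L(P)=\sum_x l(x)P(x)$ with $(+\infty)\cdot0=0$. Entropy: $S(P)=-\sum_xP(x)\ln P(x)$. In (iii), $\mathfrak M^*_0$ and $\mathfrak M^*_{+\infty}$ are understood as the limits of $\mathfrak M^*_T$ as $T\searrow0$ and $T\nearrow+\infty$ respectively. *)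

From HB Require Import structures.
From mathcomp Require Import all_boot all_order all_algebra.
From mathcomp Require Import all_classical all_reals all_analysis.
Set Implicit Arguments. Unset Strict Implicit. Unset Printing Implicit Defensive.
Import Order.TTheory GRing.Theory Num.Theory.
Import numFieldNormedType.Exports.
Local Open Scope ring_scope.
Local Open Scope classical_set_scope.

Section Paths.
Variables (R : realType) (n N : nat).
Local Notation path := {ffun 'I_N.+1 -> 'I_n}.

Definition feasible (E : rel 'I_n) (x : path) : bool :=
  [forall t : 'I_N, E (x (widen_ord (leqnSn N) t)) (x (lift ord0 t))].

Definition lfin (l : 'I_n -> 'I_n -> R) (x : path) : R :=
  \sum_(t < N) l (x (widen_ord (leqnSn N) t)) (x (lift ord0 t)).

Definition lpath (E : rel 'I_n) (l : 'I_n -> 'I_n -> R) (x : path) : \bar R :=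
  if feasible E x then (lfin l x)%:E else +oo%E.

Definition paths_between (E : rel 'I_n) (x0 xN : 'I_n) : {set path} :=
  [set x : path | [&& feasible E x, x ord0 == x0 & x ord_max == xN]].

(* exp(-l(x)/T), with exp(-oo) = 0 *)
Definition weight (E : rel 'I_n) (l : 'I_n -> 'I_n -> R) (T : R) (x : path) : R :=
  if feasible E x then expR (- lfin l x / T) else 0.

Definition Zpart E l T : R := \sum_(x : path) weight E l T x.

Definition boltz E l T : {ffun path -> R} := [ffun x => weight E l T x / Zpart E l T].

Definition is_prob (P : {ffun path -> R}) : Prop :=
  (forall x, 0 <= P x) /\ \sum_(x : path) P x = 1.

Definition marginal (P : {ffun path -> R}) (t : 'I_N.+1) (i : 'I_n) : R :=
  \sum_(x : path | x t == i) P x.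

Definition admissible (x0 xN : 'I_n) (P : {ffun path -> R}) : Prop :=
  is_prob P /\ forall i, marginal P ord0 i = (i == x0)%:R /\ marginal P ord_max i = (i == xN)%:R.

(* relative entropy, +oo if Supp P not included in Supp Q, 0 log 0 = 0 *)
Definition KL (P Q : {ffun path -> R}) : \bar R :=
  if [forall x, (P x != 0) ==> (Q x != 0)]
  then (\sum_(x : path) P x * ln (P x / Q x))%:E else +oo%E.

Definition KL_minimizer (x0 xN : 'I_n) (Q P : {ffun path -> R}) : Prop :=
  admissible x0 xN P /\ forall P', admissible x0 xN P' -> (KL P Q <= KL P' Q)%E.

(* average path length L(P), with (+oo) * 0 = 0 *)
Definition avg_len E l (P : {ffun path -> R}) : \bar R :=
  (\sum_(x : path) (lpath E l x * (P x)%:E))%E.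

Definition entropy (P : {ffun path -> R}) : R := - \sum_(x : path) P x * ln (P x).

Definition lmin E l x0 xN : \bar R :=
  \big[Order.min/+oo%E]_(y in paths_between E x0 xN) (lfin l y)%:E.

(* M*_T for T in [0,+oo], T = 0 and T = +oo meaning the limits *)
Definition Mext (M : R -> {ffun path -> R}) (T : \bar R) : {ffun path -> R} :=
  match T with
  | EFin r => if r == 0 then [ffun y => lim (M t y @[t --> 0^'+])] else M r
  | +oo%E => [ffun y => lim (M t y @[t --> +oo])]
  | -oo%E => M 0
  end.

End Paths.

(* On the admissible paths S (feasible, from x0 to xN) the Boltzmann weights are those of
   the Gibbs distribution G_T(x) ~ exp (-l(x)/T) on S, scaled by the Boltzmann mass of S;
   by Gibbs' inequality the relative-entropy minimiser is therefore G_T itself.  As T -> 0+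
   (resp. T -> +oo) G_T tends to the uniform distribution on the shortest paths (resp. on S).
   The mean length of G_T is continuous and strictly increasing in T, because the ratio
   exp (-l/T2) / exp (-l/T1) increases with l when T1 < T2 (a weighted Chebyshev inequality);
   so each value between l_m and the average length on S is the mean length of exactly one
   G_T, T in [0, +oo].  Finally ln G_T is affine in l, so Gibbs' inequality once more shows
   that G_T has maximal entropy among the admissible P with the same mean length. *)

From HB Require Import structures.
From mathcomp Require Import all_boot all_order all_algebra.
From mathcomp Require Import all_classical all_reals all_analysis.
From mathcomp Require Import ring lra.
Set Implicit Arguments.
Unset Strict Implicit.
Unset Printing Implicit Defensive.

Import Order.TTheory GRing.Theory Num.Theory.
Import numFieldNormedType.Exports.
Local Open Scope ring_scope.
Local Open Scope classical_set_scope.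

Section RealFacts.
Variable R : realType.
Implicit Types (p q u : R).

Lemma ln_le_subr1 u : 0 < u -> ln u <= u - 1.
Proof. by move=> u0; have := expR_ge1Dx (ln u); rewrite lnK ?posrE //; lra. Qed.

Lemma ln_lt_subr1 u : 0 < u -> u != 1 -> ln u < u - 1.
Proof.
move=> u0 u1; have /expR_gt1Dx : ln u != 0 by rewrite ln_eq0.
by rewrite lnK ?posrE //; lra.
Qed.

Lemma mul_ln_ratio_le p q : 0 < p -> 0 < q -> p * (ln q - ln p) <= q - p.
Proof.
move=> p0 q0; rewrite -ln_div ?posrE //.
have := @ln_le_subr1 (q / p) (divr_gt0 q0 p0); rewrite -(ler_pM2l p0).
by rewrite mulrBr mulr1 mulrCA divff ?gt_eqF // mulr1.
Qed.

Lemma mul_ln_ratio_lt p q : 0 < p -> 0 < q -> p != q -> p * (ln q - ln p) < q - p.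
Proof.
move=> p0 q0 pq; rewrite -ln_div ?posrE //.
have qp1 : q / p != 1 by apply: contra_neq pq => /divr1_eq.
have := @ln_lt_subr1 (q / p) (divr_gt0 q0 p0) qp1; rewrite -(ltr_pM2l p0).
by rewrite mulrBr mulr1 mulrCA divff ?gt_eqF // mulr1.
Qed.

End RealFacts.

Section GibbsInequality.
Variables (R : realType) (I : finType) (P Q : I -> R).
Hypotheses (P_ge0 : forall x, 0 <= P x) (Q_ge0 : forall x, 0 <= Q x).
Hypotheses (sumP1 : \sum_x P x = 1) (sumQ1 : \sum_x Q x = 1).
Hypothesis supp_PQ : forall x, P x != 0 -> 0 < Q x.

Let gap x := (Q x - P x) - P x * (ln (Q x) - ln (P x)).

Let gap_ge0 x : 0 <= gap x.
Proof.
rewrite /gap subr_ge0; have [->|Px0] := eqVneq (P x) 0.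
  by rewrite mul0r subr0.
by apply: mul_ln_ratio_le; rewrite ?supp_PQ // lt0r Px0 P_ge0.
Qed.

Let gap_gt0 x : P x != Q x -> 0 < gap x.
Proof.
move=> PQx; rewrite /gap subr_gt0; have [P0|Px0] := eqVneq (P x) 0.
  by rewrite P0 mul0r subr0 lt0r Q_ge0 andbT -P0 eq_sym.
by apply: mul_ln_ratio_lt; rewrite ?supp_PQ // lt0r Px0 P_ge0.
Qed.

Let sum_gap : \sum_x gap x = \sum_x P x * ln (P x) - \sum_x P x * ln (Q x).
Proof.
rewrite /gap !sumrB sumQ1 sumP1 subrr sub0r -sumrN -sumrB.
by apply: eq_bigr => x _; ring.
Qed.

Lemma gibbs_ineq : \sum_x P x * ln (Q x) <= \sum_x P x * ln (P x).
Proof. by rewrite -subr_ge0 -sum_gap sumr_ge0. Qed.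

Lemma gibbs_ineq_eq : \sum_x P x * ln (Q x) = \sum_x P x * ln (P x) -> P =1 Q.
Proof.
move=> eqPQ x; apply/eqP/negPn/negP => /gap_gt0; rewrite lt_neqAle gap_ge0 andbT.
move: eqPQ => /eqP; rewrite eq_sym -subr_eq0 -sum_gap psumr_eq0 // => /allP.
by move=> /(_ x (mem_index_enum x)) /eqP ->; rewrite eqxx.
Qed.

Variables (f : I -> R) (a b : R).
Hypothesis lnQ : forall x, Q x != 0 -> ln (Q x) = a + b * f x.

Let cross_entropyE (P' : I -> R) : \sum_x P' x = 1 -> (forall x, P' x != 0 -> Q x != 0) ->
  \sum_x P' x * ln (Q x) = a + b * \sum_x f x * P' x.
Proof.
move=> sumP'1 supp_P'Q; rewrite -[a]mulr1 -sumP'1 mulr_sumr mulr_sumr -big_split /=.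
apply: eq_bigr => x _; have [->|P'x0] := eqVneq (P' x) 0; first by rewrite !(mul0r, mulr0) addr0.
by rewrite lnQ ?supp_P'Q //; ring.
Qed.

Lemma max_entropy_exp_family : \sum_x f x * P x = \sum_x f x * Q x ->
  - \sum_x P x * ln (P x) <= - \sum_x Q x * ln (Q x).
Proof.
move=> meanPQ; rewrite lerN2 (cross_entropyE sumQ1) // -meanPQ.
by rewrite -(cross_entropyE sumP1) ?gibbs_ineq // => x /supp_PQ /lt0r_neq0.
Qed.

End GibbsInequality.

Lemma weighted_chebyshev_lt (R : realType) (I : finType) (A : {set I}) (a w v : I -> R) :
  (forall y z, y \in A -> z \in A -> a z < a y -> w z * v y < w y * v z) ->
  (exists y z, [/\ y \in A, z \in A & a y != a z]) ->
  (\sum_(y in A) a y * v y) * (\sum_(z in A) w z) <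
  (\sum_(y in A) a y * w y) * (\sum_(z in A) v z).
Proof.
move=> wv_incr [y0 [z0 [y0A z0A a_y0z0]]].
pose t y z := (a y - a z) * (w y * v z - w z * v y).
have t_ge0 y z : y \in A -> z \in A -> 0 <= t y z.
  move=> yA zA; rewrite /t; case: (ltrgtP (a y) (a z)) => [ayz|ayz|->].
  - by have := wv_incr _ _ zA yA ayz; nra.
  - by have := wv_incr _ _ yA zA ayz; nra.
  - by rewrite subrr mul0r.
have t_gt0 : 0 < t y0 z0.
  rewrite /t; case: (ltrgtP (a y0) (a z0)) a_y0z0 => // ayz _.
  - by have := wv_incr _ _ z0A y0A ayz; nra.
  - by have := wv_incr _ _ y0A z0A ayz; nra.
pose u y z := a y * (w y * v z - w z * v y).
have sum_u : \sum_(y in A) \sum_(z in A) u y z =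
    (\sum_(y in A) a y * w y) * (\sum_(z in A) v z) -
    (\sum_(y in A) a y * v y) * (\sum_(z in A) w z).
  rewrite !mulr_suml -sumrB; apply: eq_bigr => y _.
  by rewrite !mulr_sumr -sumrB; apply: eq_bigr => z _; rewrite /u; ring.
have sum_t : \sum_(y in A) \sum_(z in A) t y z = 2 * \sum_(y in A) \sum_(z in A) u y z.
  rewrite mulr2n mulrDl mul1r [X in _ = _ + X]exchange_big -big_split /=; apply: eq_bigr => y _.
  by rewrite -big_split /=; apply: eq_bigr => z _; rewrite /t /u; ring.
have : 0 < \sum_(y in A) \sum_(z in A) t y z.
  have sum_ge0 y : y \in A -> 0 <= \sum_(z in A | z != z0) t y z.
    by move=> yA; apply: sumr_ge0 => z /andP[zA _]; exact: t_ge0.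
  rewrite (bigD1 y0) //= (bigD1 z0) //= -addrA; apply: lt_le_trans t_gt0 _.
  rewrite lerDl addr_ge0 ?sum_ge0 //; apply: sumr_ge0 => y /andP[yA _].
  by rewrite (bigD1 z0) //= addr_ge0 ?t_ge0 ?sum_ge0.
by rewrite sum_t sum_u pmulr_rgt0 // subr_gt0.
Qed.

Section Limits.
Variable R : realType.

Lemma cvg_sumr (T : Type) (F : set_system T) {FF : Filter F} (I : finType) (P : pred I)
    (f : I -> T -> R) (a : I -> R) :
  (forall i, P i -> f i x @[x --> F] --> a i) ->
  \sum_(i | P i) f i x @[x --> F] --> \sum_(i | P i) a i.
Proof. by move=> f_cvg; apply: cvg_big => //; exact: add_continuous. Qed.

Lemma cvgr_div (T : Type) (F : set_system T) {FF : Filter F} (f g : T -> R) (a b : R) :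
  b != 0 -> f x @[x --> F] --> a -> g x @[x --> F] --> b ->
  f x / g x @[x --> F] --> a / b.
Proof. by move=> b0 fa gb; apply: cvgM fa (cvgV b0 gb). Qed.

Lemma expR_Ndiv_cvg0 (a : R) : 0 <= a ->
  expR (- a / T) @[T --> 0^'+] --> ((a == 0)%:R : R).
Proof.
rewrite le_eqVlt => /orP[/eqP <-|a_gt0].
  rewrite eqxx (_ : (fun T => _) = fun=> 1); first exact: cvg_cst.
  by apply: funext => T; rewrite oppr0 mul0r expR0.
rewrite gt_eqF //; apply: (@squeeze_cvgr _ _ _ _ (fun=> 0) (fun T => T / a)).
- near=> T; have T_gt0 : 0 < T by near: T; exact: nbhs_right_gt.
  rewrite expR_ge0 mulNr expRN -(invf_div a T) lef_pV2 ?posrE ?expR_gt0 ?divr_gt0 //.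
  by have := expR_ge1Dx (a / T); lra.
- exact: cvg_cst.
- apply: cvg_at_right_filter; have : T / a @[T --> 0] --> 0 / a.
    by apply: cvgM; [exact: cvg_id | exact: cvg_cst].
  by rewrite mul0r.
Unshelve. all: by end_near.
Qed.

Lemma expR_Ndiv_cvgy (a : R) : expR (- a / T) @[T --> +oo] --> (1 : R).
Proof.
rewrite -expR0; apply: continuous_cvg; first exact: continuous_expR.
rewrite -(mulr0 (- a)); apply: cvgM; first exact: cvg_cst.
by apply/gtr0_cvgV0; [exact: nbhs_pinfty_gt | exact: cvg_id].
Qed.

Lemma expR_Ndiv_cvg (a x : R) : x != 0 -> expR (- a / T) @[T --> x] --> expR (- a / x).
Proof.
move=> x0; apply: continuous_cvg; first exact: continuous_expR.
by apply: cvgM; [exact: cvg_cst | exact: inv_continuous].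
Qed.

End Limits.

Section Uniform.
Variables (R : realType) (I : finType).
Implicit Types (B : {set I}) (x : I).

Definition unif (B : {set I}) : {ffun I -> R} := [ffun x => if x \in B then #|B|%:R^-1 else 0].

Lemma unif_ge0 B x : 0 <= unif B x.
Proof. by rewrite ffunE; case: ifP => // _; rewrite invr_ge0 ler0n. Qed.

Lemma unif_gt0 B x : x \in B -> 0 < unif B x.
Proof. by move=> xB; rewrite ffunE xB invr_gt0 ltr0n; apply/card_gt0P; exists x. Qed.

Lemma unif_supp B x : unif B x != 0 -> x \in B.
Proof. by rewrite ffunE; case: ifP => // _; rewrite eqxx. Qed.

Lemma sum_mul_unif B (g : I -> R) : \sum_x g x * unif B x = (\sum_(x in B) g x) / #|B|%:R.
Proof.
rewrite mulr_suml [RHS]big_mkcond /=; apply: eq_bigr => x _.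
by rewrite ffunE; case: ifP; rewrite ?mulr0 ?mul0r.
Qed.

Lemma sum_unif B : (0 < #|B|)%N -> \sum_x unif B x = 1.
Proof.
move=> B_gt0; under eq_bigr do rewrite -[unif B _]mul1r.
by rewrite sum_mul_unif sumr_const divff // pnatr_eq0 -lt0n.
Qed.

Lemma ln_unif B x : x \in B -> ln (unif B x) = - ln #|B|%:R.
Proof.
move=> xB; have := unif_gt0 xB; rewrite ffunE xB invr_gt0 => B_gt0.
by rewrite lnV ?posrE.
Qed.

Lemma entropy_le_unif B (P : I -> R) :
  (0 < #|B|)%N -> (forall x, 0 <= P x) -> \sum_x P x = 1 -> (forall x, P x != 0 -> x \in B) ->
  - \sum_x P x * ln (P x) <= - \sum_x unif B x * ln (unif B x).
Proof.
move=> B_gt0 P_ge0 sumP1 PB.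
apply: (@max_entropy_exp_family _ _ _ _ _ _ sumP1 _ _ (fun=> 0) (- ln #|B|%:R) 0) => //.
- exact: unif_ge0.
- exact: sum_unif.
- by move=> x /PB /unif_gt0.
- by move=> x /unif_supp /ln_unif ->; rewrite mul0r addr0.
- by rewrite !big1 // => x _; rewrite mul0r.
Qed.

End Uniform.

Arguments unif {R I} B.

Section GibbsMeasure.
Variables (R : realType) (I : finType) (A : {set I}) (f : I -> R).
Implicit Types (T : R) (x y : I) (P : {ffun I -> R}).

Definition mean P : R := \sum_x f x * P x.

Definition gibbs_part T : R := \sum_(x in A) expR (- f x / T).

Definition gibbs T : {ffun I -> R} :=
  [ffun x => if x \in A then expR (- f x / T) / gibbs_part T else 0].

Lemma mean_cvg (U : Type) (F : set_system U) {FF : Filter F} (G : U -> {ffun I -> R}) P :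
  (forall x, G u x @[u --> F] --> P x) -> mean (G u) @[u --> F] --> mean P.
Proof.
move=> GP; apply: (@cvg_sumr _ _ _ _ _ predT) => x _.
by apply: cvgM; [exact: cvg_cst | exact: GP].
Qed.

Variable z : I.
Hypotheses (zA : z \in A) (z_min : forall y, y \in A -> f z <= f y).

Lemma gibbs_part_gt0 T : 0 < gibbs_part T.
Proof.
rewrite /gibbs_part (bigD1 z) //= ltr_pwDl ?expR_gt0 //.
by apply: sumr_ge0 => x _; rewrite expR_ge0.
Qed.

Lemma gibbs_gt0 T x : x \in A -> 0 < gibbs T x.
Proof. by move=> xA; rewrite ffunE xA divr_gt0 ?expR_gt0 ?gibbs_part_gt0. Qed.

Lemma gibbs_out T x : x \notin A -> gibbs T x = 0.
Proof. by rewrite ffunE => /negbTE ->. Qed.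

Lemma gibbs_ge0 T x : 0 <= gibbs T x.
Proof.
by have [/(gibbs_gt0 T)/ltW|/(gibbs_out T)->] := boolP (x \in A).
Qed.

Lemma gibbs_supp T x : gibbs T x != 0 -> x \in A.
Proof. by apply: contraR => /(gibbs_out T)->. Qed.

Lemma sum_gibbs T : \sum_x gibbs T x = 1.
Proof.
under eq_bigr do rewrite ffunE; rewrite -big_mkcond /=.
by rewrite -mulr_suml divff // gt_eqF // gibbs_part_gt0.
Qed.

Lemma ln_gibbs T x : x \in A -> ln (gibbs T x) = - ln (gibbs_part T) + (- T^-1) * f x.
Proof.
move=> xA; rewrite ffunE xA ln_div ?posrE ?expR_gt0 ?gibbs_part_gt0 // expRK; ring.
Qed.

Definition minimizers : {set I} := [set y in A | f y == f z].

Lemma minimizers_card : (0 < #|minimizers|)%N.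
Proof. by apply/card_gt0P; exists z; rewrite inE zA eqxx. Qed.

Lemma mean_unif_minimizers : mean (unif minimizers) = f z.
Proof.
rewrite /mean sum_mul_unif (eq_bigr (fun=> f z)); last by move=> y; rewrite inE => /andP[_ /eqP].
by rewrite sumr_const -[_ *+ _]mulr_natr mulfK // pnatr_eq0 -lt0n minimizers_card.
Qed.

Lemma gibbs_cvg T0 x : T0 != 0 -> gibbs T x @[T --> T0] --> gibbs T0 x.
Proof.
move=> T0_neq0; have [xA|xA] := boolP (x \in A); last first.
  by under eq_cvg do rewrite gibbs_out //; rewrite gibbs_out //; exact: cvg_cst.
rewrite ffunE xA; under eq_cvg do rewrite ffunE xA.
apply: cvgr_div; first by rewrite gt_eqF // gibbs_part_gt0.
  exact: expR_Ndiv_cvg.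
by apply: cvg_sumr => y _; exact: expR_Ndiv_cvg.
Qed.

Lemma gibbs_cvg0 x : gibbs T x @[T --> 0^'+] --> unif minimizers x.
Proof.
have [xA|xA] := boolP (x \in A); last first.
  rewrite ffunE inE (negbTE xA) /=.
  by under eq_cvg do rewrite gibbs_out //; exact: cvg_cst.
(* Measured from the minimum f z, the weights of the minimizers are 1 and the others
   vanish as T -> 0+. *)
have shift T : gibbs T x =
    expR (- (f x - f z) / T) / \sum_(y in A) expR (- (f y - f z) / T).
  have e y : expR (- (f y - f z) / T) = expR (- f y / T) * expR (f z / T).
    by rewrite -expRD; congr expR; ring.
  under eq_bigr do rewrite e.
  rewrite ffunE xA e -mulr_suml -/(gibbs_part T).
  by field; rewrite !gt_eqF ?expR_gt0 ?gibbs_part_gt0.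
under eq_cvg do rewrite shift.
have count_min : \sum_(y in A) ((f y - f z == 0)%:R : R) = #|minimizers|%:R.
  rewrite (eq_bigr (fun y => if f y == f z then 1 else 0)); last first.
    by move=> y _; rewrite subr_eq0; case: (f y == f z).
  rewrite -big_mkcondr sumr_const; congr _%:R.
  by apply: eq_card => y; rewrite inE.
have -> : unif minimizers x = (f x - f z == 0)%:R / #|minimizers|%:R :> R.
  by rewrite ffunE inE xA subr_eq0; case: (f x == f z); rewrite ?mul1r ?mul0r.
rewrite -count_min; apply: cvgr_div.
- by rewrite count_min pnatr_eq0 -lt0n minimizers_card.
- by apply: expR_Ndiv_cvg0; rewrite subr_ge0 z_min.
- by apply: cvg_sumr => y yA; apply: expR_Ndiv_cvg0; rewrite subr_ge0 z_min.
Qed.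

Lemma gibbs_cvgy x : gibbs T x @[T --> +oo] --> unif A x.
Proof.
have [xA|xA] := boolP (x \in A); last first.
  rewrite ffunE (negbTE xA).
  by under eq_cvg do rewrite gibbs_out //; exact: cvg_cst.
rewrite ffunE xA; under eq_cvg do rewrite ffunE xA.
have A_gt0 : (0 < #|A|)%N by apply/card_gt0P; exists z.
have -> : #|A|%:R^-1 = 1 / \sum_(y in A) 1 :> R by rewrite sumr_const mul1r.
apply: cvgr_div.
- by rewrite sumr_const pnatr_eq0 -lt0n.
- exact: expR_Ndiv_cvgy.
- by apply: cvg_sumr => y _; exact: expR_Ndiv_cvgy.
Qed.

Lemma mean_gibbsE T :
  mean (gibbs T) = (\sum_(x in A) f x * expR (- f x / T)) / gibbs_part T.
Proof.
rewrite /mean mulr_suml [RHS]big_mkcond; apply: eq_bigr => x _.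
by rewrite ffunE; case: ifP; rewrite ?mulr0 ?mul0r ?mulrA.
Qed.

Lemma supp_minimizers (P : {ffun I -> R}) x : (forall x, 0 <= P x) -> \sum_x P x = 1 ->
  (forall x, P x != 0 -> x \in A) -> mean P = mean (unif minimizers) ->
  P x != 0 -> x \in minimizers.
Proof.
move=> P_ge0 sumP1 PA; rewrite mean_unif_minimizers => meanP Px.
have excess_ge0 y : 0 <= (f y - f z) * P y.
  have [->|/PA yA] := eqVneq (P y) 0; first by rewrite mulr0.
  by rewrite mulr_ge0 // subr_ge0 z_min.
have : \sum_y (f y - f z) * P y = 0.
  by under eq_bigr do rewrite mulrBl; rewrite sumrB -/(mean P) meanP -mulr_sumr sumP1 mulr1 subrr.
move=> /eqP; rewrite psumr_eq0 // => /allP /(_ x (mem_index_enum x)) /=.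
by rewrite mulf_eq0 (negbTE Px) orbF subr_eq0 inE PA.
Qed.

Definition gibbs_ext (T : \bar R) : {ffun I -> R} :=
  match T with
  | r%:E => if r <= 0 then unif minimizers else gibbs r
  | +oo%E => unif A
  | -oo%E => unif minimizers
  end.

Lemma gibbs_ext_ge0 (T : \bar R) x : 0 <= gibbs_ext T x.
Proof. by case: T => [r||] /=; rewrite ?unif_ge0 //; case: ifP; rewrite ?unif_ge0 ?gibbs_ge0. Qed.

Lemma sum_gibbs_ext (T : \bar R) : \sum_x gibbs_ext T x = 1.
Proof.
have A_gt0 : (0 < #|A|)%N by apply/card_gt0P; exists z.
case: T => [r||] /=; rewrite ?sum_unif ?minimizers_card //.
by case: ifP; rewrite ?sum_unif ?minimizers_card ?sum_gibbs.
Qed.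

Lemma gibbs_ext_supp (T : \bar R) x : gibbs_ext T x != 0 -> x \in A.
Proof.
have minA y : y \in minimizers -> y \in A by rewrite inE => /andP[].
case: T => [r||] /=; [case: ifP => _ | |];
  by [move/unif_supp/minA | move/gibbs_supp | move/unif_supp].
Qed.

Lemma max_entropy_gibbs_ext (T : \bar R) (P : {ffun I -> R}) :
  (forall x, 0 <= P x) -> \sum_x P x = 1 -> (forall x, P x != 0 -> x \in A) ->
  mean P = mean (gibbs_ext T) ->
  - \sum_x P x * ln (P x) <= - \sum_x gibbs_ext T x * ln (gibbs_ext T x).
Proof.
move=> P_ge0 sumP1 PA meanP.
have at_zero : mean P = mean (unif minimizers) ->
    - \sum_x P x * ln (P x) <= - \sum_x unif minimizers x * ln (unif minimizers x).
  move=> meanP0; apply: (entropy_le_unif minimizers_card P_ge0 sumP1) => x.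
  exact: supp_minimizers P_ge0 sumP1 PA meanP0.
have A_gt0 : (0 < #|A|)%N by apply/card_gt0P; exists z.
move: meanP; case: T => [r||] /=; [case: ifP => [_|/negbT] | |].
- exact: at_zero.
- rewrite -ltNge => r_gt0 meanP.
  apply: (max_entropy_exp_family P_ge0 (gibbs_ge0 r) sumP1 (sum_gibbs r) _
    (a := - ln (gibbs_part r)) (b := - r^-1)) meanP.
  + by move=> x /PA /gibbs_gt0.
  + by move=> x /gibbs_supp /ln_gibbs.
- by move=> _; exact: entropy_le_unif.
- exact: at_zero.
Qed.

Hypothesis f_nonconst : exists y y', [/\ y \in A, y' \in A & f y != f y'].

Lemma mean_gibbs_lt T1 T2 : 0 < T1 -> T1 < T2 -> mean (gibbs T1) < mean (gibbs T2).
Proof.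
move=> T1_gt0 T12; have T2_gt0 := lt_trans T1_gt0 T12.
rewrite !mean_gibbsE ltr_pdivrMr ?gibbs_part_gt0 // mulrAC ltr_pdivlMr ?gibbs_part_gt0 //.
apply: weighted_chebyshev_lt f_nonconst => y y' _ _ fy'y.
rewrite -!expRD ltr_expR -subr_gt0.
have T21 : T2^-1 < T1^-1 by rewrite ltf_pV2 ?posrE.
have : 0 < (f y - f y') * (T1^-1 - T2^-1) by rewrite mulr_gt0 // subr_gt0.
by congr (0 < _); ring.
Qed.

Lemma mean_gibbs_lt_unif T : 0 < T -> mean (gibbs T) < mean (unif A).
Proof.
move=> T_gt0; have A_gt0 : (0 < #|A|)%N by apply/card_gt0P; exists z.
rewrite mean_gibbsE /mean sum_mul_unif ltr_pdivrMr ?gibbs_part_gt0 // mulrAC.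
rewrite ltr_pdivlMr ?ltr0n // -sumr_const.
under [X in _ < X * _]eq_bigr do rewrite -[f _]mulr1.
apply: weighted_chebyshev_lt f_nonconst => y y' _ _ fy'y.
by rewrite !mul1r ltr_expR !mulNr ltrN2 ltr_pM2r ?invr_gt0.
Qed.

Lemma mean_unif_minimizers_lt T : mean (unif minimizers) < mean (gibbs T).
Proof.
have [y yA fyz] : exists2 y, y \in A & f y != f z.
  have [y [y' [yA y'A]]] := f_nonconst; have [<-|] := eqVneq (f y) (f z).
    by exists y'; rewrite // eq_sym.
  by exists y.
rewrite mean_unif_minimizers mean_gibbsE ltr_pdivlMr ?gibbs_part_gt0 // -subr_gt0.
rewrite /gibbs_part mulr_sumr -sumrB.
under eq_bigr do rewrite -mulrBl.
rewrite (bigD1 y) //=; apply: ltr_pwDl.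
  by rewrite mulr_gt0 ?expR_gt0 // subr_gt0 lt_neqAle eq_sym fyz z_min.
by apply: sumr_ge0 => x /andP[xA _]; rewrite mulr_ge0 ?expR_ge0 // subr_ge0 z_min.
Qed.

Lemma mean_gibbs_ext_lt (T1 T2 : \bar R) : (0 <= T1)%E -> (T1 < T2)%E ->
  mean (gibbs_ext T1) < mean (gibbs_ext T2).
Proof.
have min_lt_unif := lt_trans (mean_unif_minimizers_lt 1) (mean_gibbs_lt_unif ltr01).
case: T1 T2 => [r1||] [r2||] //=; rewrite ?lee_fin ?lte_fin => r1_ge0 r12.
- have [r2_le0|r2_gt0] := leP r2 0.
    by have := le_lt_trans r1_ge0 r12; rewrite ltNge r2_le0.
  have [_|r1_gt0] := leP r1 0; first exact: mean_unif_minimizers_lt.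
  exact: mean_gibbs_lt.
- by have [_|r1_gt0] := leP r1 0; last exact: mean_gibbs_lt_unif.
Qed.

Lemma mean_gibbs_ext_inj (T1 T2 : \bar R) : (0 <= T1)%E -> (0 <= T2)%E ->
  mean (gibbs_ext T1) = mean (gibbs_ext T2) -> T1 = T2.
Proof.
move=> T1_ge0 T2_ge0 eq12; case: (ltgtP T1 T2) => // [T12|T21].
- by have := mean_gibbs_ext_lt T1_ge0 T12; rewrite eq12 ltxx.
- by have := mean_gibbs_ext_lt T2_ge0 T21; rewrite eq12 ltxx.
Qed.

Lemma mean_gibbs_onto L : mean (unif minimizers) < L < mean (unif A) ->
  exists2 T, 0 < T & mean (gibbs T) = L.
Proof.
move=> /andP[minL LA].
have [T1 [T1_gt0 T1L]] : exists T1, 0 < T1 /\ mean (gibbs T1) < L.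
  apply: (@filter_ex _ _ (at_right_proper_filter 0)); near=> T; split.
    by near: T; exact: nbhs_right_gt.
  by near: T; apply: (cvgr_lt _ (mean_cvg gibbs_cvg0)).
have [T2 [T2_gt0 LT2]] : exists T2, 0 < T2 /\ L < mean (gibbs T2).
  apply: (@filter_ex _ _ proper_pinfty_nbhs); near=> T; split.
    by near: T; exact: nbhs_pinfty_gt.
  by near: T; apply: (cvgr_gt _ (mean_cvg gibbs_cvgy)).
have T12 : T1 < T2.
  case: (ltgtP T1 T2) (lt_trans T1L LT2) => // [T21|->]; last by rewrite ltxx.
  by rewrite ltNge (ltW (mean_gibbs_lt T2_gt0 T21)).
have cont : {within `[T1, T2], continuous (fun T => mean (gibbs T))}.
  apply: continuous_in_subspaceT => T; rewrite inE /= in_itv /= => /andP[T1T _].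
  by apply: mean_cvg => x; apply: gibbs_cvg; rewrite gt_eqF // (lt_le_trans T1_gt0).
have L_between : Num.min (mean (gibbs T1)) (mean (gibbs T2)) <= L <=
    Num.max (mean (gibbs T1)) (mean (gibbs T2)).
  by rewrite ge_min le_max (ltW T1L) (ltW LT2) orbT.
have [T] := IVT (ltW T12) cont L_between.
rewrite in_itv /= => /andP[T1T _] meanT; exists T => //.
exact: lt_le_trans T1_gt0 T1T.
Unshelve. all: by end_near.
Qed.

Lemma mean_gibbs_ext_onto L : mean (unif minimizers) <= L <= mean (unif A) ->
  exists2 T : \bar R, (0 <= T)%E & mean (gibbs_ext T) = L.
Proof.
rewrite le_eqVlt => /andP[/orP[/eqP minL|minL]]; first by exists 0%:E; rewrite //= lexx.
rewrite le_eqVlt => /orP[/eqP->|LA]; first by exists +oo%E.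
have [T T_gt0 meanT] := mean_gibbs_onto (introT andP (conj minL LA)).
exists T%:E; first by rewrite lee_fin ltW.
by rewrite /= leNgt T_gt0.
Qed.

End GibbsMeasure.

Section Paths.
Variables (R : realType) (n N : nat) (E : rel 'I_n) (l : 'I_n -> 'I_n -> R) (x0 xN : 'I_n).
Local Notation path := {ffun 'I_N.+1 -> 'I_n}.
Local Notation S := (paths_between N E x0 xN).
Local Notation lf := (@lfin R n N l).
Implicit Types (P : {ffun path -> R}) (x : path).

Lemma feasible_paths_between x : x \in S -> feasible E x.
Proof. by rewrite inE => /and3P[]. Qed.

Lemma marginal_delta P t c i : is_prob P -> (forall x, P x != 0 -> x t = c) ->
  marginal P t i = (i == c)%:R.
Proof.
move=> [P_ge0 sumP1] Pc; rewrite /marginal; have [->|ic] := eqVneq i c.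
  rewrite -sumP1 [RHS](bigID (fun x : path => x t == c)) /= [X in _ + X]big1 ?addr0 //.
  by move=> x; apply: contraNeq => /Pc ->.
by apply: big1 => x /eqP xti; apply/eqP; apply: contraNT ic => /Pc <-; rewrite xti.
Qed.

Lemma marginal_delta_supp P t c x : (forall x, 0 <= P x) ->
  (forall i, marginal P t i = (i == c)%:R) -> P x != 0 -> x t = c.
Proof.
move=> P_ge0 Pc Px; apply/eqP; apply: contraTT Px => xtc.
have := Pc (x t); rewrite (negbTE xtc) /marginal => /eqP.
rewrite psumr_eq0 // => /allP /(_ x (mem_index_enum x)).
by rewrite eqxx negbK.
Qed.

Lemma admissible_supp P : is_prob P -> (forall x, P x != 0 -> x \in S) ->
  admissible x0 xN P.
Proof.
move=> Pprob PS; split => // i.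
by split; apply: marginal_delta => // x /PS; rewrite inE => /and3P[_ /eqP ? /eqP ?].
Qed.

Lemma admissible_endpoints P x : admissible x0 xN P -> P x != 0 ->
  x ord0 = x0 /\ x ord_max = xN.
Proof.
move=> [[P_ge0 _] Pmarg] Px.
by split; apply: (marginal_delta_supp P_ge0) Px => i; have [] := Pmarg i.
Qed.

Lemma avg_len_feasible P r x : avg_len E l P = r%:E -> P x != 0 -> feasible E x.
Proof.
move=> Pr Px; apply: contraTT Px => x_inf.
have : avg_len E l P \is a fin_num by rewrite Pr.
move=> /sum_fin_numP /(_ x (mem_index_enum x) isT).
rewrite /lpath (negbTE x_inf) mulyr.
by case: sgrP => //; rewrite ?mul1e ?mulN1e.
Qed.

Lemma avg_lenE P : (forall x, P x != 0 -> feasible E x) -> avg_len E l P = (mean lf P)%:E.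
Proof.
move=> Pfeas; rewrite /avg_len /mean -sumEFin; apply: eq_bigr => x _.
have [->|Px] := eqVneq (P x) 0; first by rewrite mule0 mulr0.
by rewrite /lpath Pfeas.
Qed.

Lemma avg_len_supp P r x : admissible x0 xN P -> avg_len E l P = r%:E -> P x != 0 -> x \in S.
Proof.
move=> Padm Pr Px; have [x_start x_end] := admissible_endpoints Padm Px.
by rewrite inE (avg_len_feasible Pr Px) x_start x_end !eqxx.
Qed.

Variable zm : path.
Hypothesis zmS : zm \in S.

Local Notation G := (gibbs S lf).
Local Notation ZS := (gibbs_part S lf).

Lemma gibbs_prob T : is_prob (G T).
Proof. by split; [move=> x; exact: (gibbs_ge0 lf zmS T x) | exact: (sum_gibbs lf zmS T)]. Qed.

Lemma gibbs_part_le_Zpart T : ZS T <= Zpart N E l T.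
Proof.
rewrite /Zpart (bigID (mem S)) /= -[leLHS]addr0 lerD //.
  by apply: ler_sum => x xS; rewrite /weight feasible_paths_between.
by apply: sumr_ge0 => x _; rewrite /weight; case: ifP => // _; rewrite expR_ge0.
Qed.

Let boltz_mass T := ZS T / Zpart N E l T.

Let boltz_mass_gt0 T : 0 < boltz_mass T.
Proof.
have ZS_gt0 := gibbs_part_gt0 lf zmS T.
by rewrite divr_gt0 // (lt_le_trans ZS_gt0 (gibbs_part_le_Zpart T)).
Qed.

Lemma boltz_paths T x : x \in S -> boltz N E l T x = G T x * boltz_mass T.
Proof.
move=> xS; have ZS_gt0 := gibbs_part_gt0 lf zmS T.
have Z_gt0 := lt_le_trans ZS_gt0 (gibbs_part_le_Zpart T).
rewrite !ffunE xS /weight feasible_paths_between // /boltz_mass.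
by field; rewrite !gt_eqF.
Qed.

Lemma KL_boltzE T P : is_prob P -> (forall x, P x != 0 -> x \in S) ->
  KL P (boltz N E l T) =
  (\sum_x P x * ln (P x) - \sum_x P x * ln (G T x) - ln (boltz_mass T))%:E.
Proof.
move=> [P_ge0 sumP1] PS; rewrite /KL ifT; last first.
  apply/forallP => x; apply/implyP => /PS xS.
  by rewrite boltz_paths // mulf_neq0 // gt_eqF // (gibbs_gt0 lf zmS).
congr EFin; rewrite -[ln _]mul1r -sumP1 mulr_suml -!sumrB; apply: eq_bigr => x _.
have [->|Px] := eqVneq (P x) 0; first by rewrite !mul0r !subr0.
have xS := PS x Px; have P_gt0 : 0 < P x by rewrite lt0r Px P_ge0.
have G_gt0 : 0 < G T x by exact: (gibbs_gt0 lf zmS).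
have GB_gt0 : 0 < G T x * boltz_mass T by rewrite mulr_gt0.
by rewrite boltz_paths // ln_div ?posrE // lnM ?posrE //; ring.
Qed.

Lemma KL_minimizer_gibbs T P : KL_minimizer x0 xN (boltz N E l T) P -> P = G T.
Proof.
move=> [Padm Pmin]; have [P_ge0 sumP1] := Padm.1.
have Gadm : admissible x0 xN (G T) by apply: admissible_supp (gibbs_prob T) _ => x /gibbs_supp.
have := Pmin _ Gadm; rewrite (KL_boltzE T (gibbs_prob T)) => [KL_le|x /gibbs_supp //].
have PS x : P x != 0 -> x \in S.
  move=> Px; have [x_start x_end] := admissible_endpoints Padm Px.
  move: KL_le; rewrite /KL; case: ifP => [/forallP/(_ x)/implyP/(_ Px) boltz_x _|//].
  move: boltz_x; rewrite ffunE /weight.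
  by case: ifP => [x_feas _|_]; rewrite ?mul0r ?eqxx // inE x_feas x_start x_end !eqxx.
have supp_PG x : P x != 0 -> 0 < G T x by move/PS/(gibbs_gt0 lf zmS).
move: KL_le; rewrite (KL_boltzE T Padm.1 PS) lee_fin subrr sub0r => KL_le.
have PG : \sum_x P x * ln (P x) <= \sum_x P x * ln (G T x) by lra.
have GP := gibbs_ineq P_ge0 (gibbs_ge0 lf zmS T) sumP1 (sum_gibbs lf zmS T) supp_PG.
apply/ffunP; apply: (gibbs_ineq_eq P_ge0 (gibbs_ge0 lf zmS T) sumP1 (sum_gibbs lf zmS T) supp_PG).
by apply/le_anti; rewrite PG GP.
Qed.

Hypothesis zm_min : forall y, y \in S -> lf zm <= lf y.

Lemma lmin_argmin : lmin N E l x0 xN = (lf zm)%:E.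
Proof.
rewrite /lmin (bigmin_eq_arg _ zm) //; last by move=> y _; exact: leey.
case: arg_minP => // y yS y_min; congr EFin; apply/le_anti.
by rewrite zm_min // -lee_fin y_min.
Qed.

Local Notation Gext := (gibbs_ext S lf zm).

Lemma gibbs_ext_prob T : is_prob (Gext T).
Proof. by split; [move=> x; exact: (gibbs_ext_ge0 lf zmS) | exact: (sum_gibbs_ext lf zmS)]. Qed.

Lemma avg_len_gibbs_ext T : avg_len E l (Gext T) = (mean lf (Gext T))%:E.
Proof. by apply: avg_lenE => x /gibbs_ext_supp /feasible_paths_between. Qed.

Lemma admissible_gibbs_ext T : admissible x0 xN (Gext T).
Proof. by apply: admissible_supp (gibbs_ext_prob T) _ => x /gibbs_ext_supp. Qed.

Lemma entropy_le_gibbs_ext T P : admissible x0 xN P ->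
  avg_len E l P = (mean lf (Gext T))%:E -> entropy P <= entropy (Gext T).
Proof.
move=> Padm PL; have [P_ge0 sumP1] := Padm.1; have PS := avg_len_supp Padm PL.
apply: (max_entropy_gibbs_ext zmS zm_min P_ge0 sumP1 PS); apply: EFin_inj.
by rewrite -PL avg_lenE // => x /PS /feasible_paths_between.
Qed.

Variable M : R -> {ffun path -> R}.
Hypothesis M_min : forall T, 0 < T -> KL_minimizer x0 xN (boltz N E l T) (M T).

Lemma KL_minimizer_cvg0 y : M T y @[T --> 0^'+] --> unif (minimizers S lf zm) y.
Proof.
apply: cvg_trans (gibbs_cvg0 zmS zm_min (x := y)); apply: near_eq_cvg; near=> T.
have T_gt0 : 0 < T by near: T; exact: nbhs_right_gt.
by rewrite (KL_minimizer_gibbs (M_min T_gt0)).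
Unshelve. all: by end_near.
Qed.

Lemma KL_minimizer_cvgy y : M T y @[T --> +oo] --> unif S y.
Proof.
apply: cvg_trans (gibbs_cvgy lf zmS (x := y)); apply: near_eq_cvg; near=> T.
have T_gt0 : 0 < T by near: T; exact: nbhs_pinfty_gt.
by rewrite (KL_minimizer_gibbs (M_min T_gt0)).
Unshelve. all: by end_near.
Qed.

Lemma Mext_gibbs_ext T : (0 <= T)%E -> Mext M T = Gext T.
Proof.
case: T => [r||] //=; rewrite ?lee_fin => r_ge0; last first.
  by apply/ffunP => y; rewrite ffunE; apply: cvg_lim => //; exact: KL_minimizer_cvgy.
have [->|r_ne0] := eqVneq r 0.
  by rewrite lexx; apply/ffunP => y; rewrite ffunE; apply: cvg_lim => //; exact: KL_minimizer_cvg0.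
have r_gt0 : 0 < r by rewrite lt0r r_ne0.
by rewrite leNgt r_gt0 /=; exact: KL_minimizer_gibbs (M_min r_gt0).
Qed.

End Paths.

Unset Implicit Arguments.

Theorem theorem4 (R : realType) (n N : nat) (E : rel 'I_n)
  (l : 'I_n -> 'I_n -> R) (x0 xN : 'I_n)
  (M : R -> {ffun {ffun 'I_N.+1 -> 'I_n} -> R}) :
  (0 < N)%N ->
  (forall i j, E i j -> 0 <= l i j) ->
  (0 < #|paths_between N E x0 xN|)%N ->
  (forall T, 0 < T -> KL_minimizer x0 xN (boltz N E l T) (M T)) ->
  [/\ (* (i) *)
      (forall y, y \in paths_between N E x0 xN -> (lmin N E l x0 xN < (lfin l y)%:E)%E ->
         M T y @[T --> 0^'+] --> 0),
      (* (ii) *)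
      (forall y, M T y @[T --> +oo] -->
         (if y \in paths_between N E x0 xN then #|paths_between N E x0 xN|%:R^-1 else 0 : R))
    & (* (iii) *)
      (1 < #|paths_between N E x0 xN|)%N ->
      (exists y z, [/\ y \in paths_between N E x0 xN, z \in paths_between N E x0 xN
                     & lfin l y != lfin l z]) ->
      forall Lbar : R,
        (lmin N E l x0 xN <= Lbar%:E)%E ->
        Lbar <= (\sum_(y in paths_between N E x0 xN) lfin l y) / #|paths_between N E x0 xN|%:R ->
        exists T : \bar R,
          [/\ (0 <= T)%E,
              avg_len E l (Mext M T) = Lbar%:E,
              (forall T' : \bar R, (0 <= T')%E -> avg_len E l (Mext M T') = Lbar%:E -> T' = T),
              admissible x0 xN (Mext M T)
            & (forall P : {ffun {ffun 'I_N.+1 -> 'I_n} -> R}, admissible x0 xN P -> avg_len E l P = Lbar%:E ->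
                 entropy P <= entropy (Mext M T))]].
Proof.
move=> _ _ S_gt0 M_min; have [z0 z0S] := card_gt0P S_gt0.
have [zm zmS zm_min] := arg_minP (lfin l) z0S.
have Mext_eq T := Mext_gibbs_ext zmS zm_min M_min (T := T).
split.
- move=> y yS; rewrite (lmin_argmin zmS zm_min) lte_fin => lt_zm_y.
  have := KL_minimizer_cvg0 zmS zm_min M_min (y := y).
  by rewrite ffunE inE yS gt_eqF.
- by move=> y; have := KL_minimizer_cvgy zmS M_min (y := y); rewrite ffunE.
move=> _ nonconst L; rewrite (lmin_argmin zmS zm_min) lee_fin -(mean_unif_minimizers _ zmS) => minL.
rewrite -(sum_mul_unif _ (lfin l)) => LS.
have [T T_ge0 meanT] := mean_gibbs_ext_onto zmS zm_min nonconst (introT andP (conj minL LS)).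
exists T; split => //.
- by rewrite Mext_eq // avg_len_gibbs_ext meanT.
- move=> T' T'_ge0; rewrite Mext_eq // avg_len_gibbs_ext -meanT => -[meanT'].
  exact: (mean_gibbs_ext_inj zmS zm_min nonconst) meanT'.
- by rewrite Mext_eq //; exact: admissible_gibbs_ext.
- by move=> P Padm; rewrite Mext_eq // -meanT; exact: entropy_le_gibbs_ext.
Qed.
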